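(* Let $G$ be a graph containing a cycle $C_n$ as a subgraph, where $n\ge 5$ is an integer not divisible by $4$. Then $G$ is a $4$-$\chi_\rho$-critical graph if and only if $G$ is isomorphic to $C_n$.
   Context: Graphs are finite and simple. A $k$-packing coloring of $G$ is a map $c:V(G)\to\{1,\ldots,k\}$ such that two distinct vertices $u,v$ with $c(u)=c(v)=i$ satisfy $d_G(u,v)>i$ (distance between vertices in different components is infinite); $\chi_\rho(G)$ is the smallest $k$ for which such a coloring exists. $G$ is $\chi_\rho$-critical if $\chi_\rho(H)<\chi_\rho(G)$ for every proper subgraph $H$ of $G$, and $4$-$\chi_\rho$-critical if moreover $\chi_\rho(G)=4$. *)

From mathcomp Require Import all_boot.
Set Implicit Arguments. Unset Strict Implicit. Unset Printing Implicit Defensive.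

Section PackingDefs.
Variable T : finType.

(* A (sub)graph is given by a vertex set S : {set T} and an edge relation
   f : rel T (meant to be symmetric, irreflexive and to live on S). *)

(* within f k u v : there is a walk of length at most k from u to v using
   edges of f, i.e. d(u,v) <= k (infinite distance = no such walk). *)
Fixpoint within (f : rel T) (k : nat) (u v : T) : bool :=
  if k is k'.+1 then within f k' u v || [exists w, f u w && within f k' w v]
  else u == v.

Definition packing_coloring (S : {set T}) (f : rel T) (k : nat) (c : T -> nat)
  : bool :=
  [forall x in S, (1 <= c x <= k)] &&
  [forall u in S, forall v in S,
     ((u != v) && (c u == c v)) ==> ~~ within f (c u) u v].

Definition packing_colorable (S : {set T}) (f : rel T) (k : nat) : bool :=
  [exists c : {ffun T -> 'I_k.+1}, packing_coloring S f k (fun x => nat_of_ord (c x))].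

Lemma packing_colorable_card (S : {set T}) (f : rel T) :
  packing_colorable S f #|T|.
Proof.
apply/existsP.
exists [ffun x => inord (enum_rank x).+1 : 'I_#|T|.+1].
apply/andP; split.
  apply/forall_inP => x _; rewrite ffunE inordK; last by rewrite ltnS ltn_ord.
  by rewrite /= ltn_ord.
apply/forall_inP => u _; apply/forall_inP => v _; apply/implyP.
case/andP => uv; rewrite !ffunE.
rewrite !inordK ?ltnS ?ltn_ord //.
move/eqP=> [] /val_inj /enum_rank_inj Euv.
by rewrite Euv eqxx in uv.
Qed.

Lemma packing_colorable_ex (S : {set T}) (f : rel T) :
  exists k, packing_colorable S f k.
Proof. by exists #|T|; apply: packing_colorable_card. Qed.

Definition packing_chi (S : {set T}) (f : rel T) : nat :=
  ex_minn (packing_colorable_ex S f).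

Definition subgraph (e : rel T) (S : {set T}) (f : rel T) : Prop :=
  (forall u v, f u v -> [&& e u v, u \in S & v \in S]) /\ symmetric f.

Definition proper_subgraph (e : rel T) (S : {set T}) (f : rel T) : Prop :=
  subgraph e S f /\ (S != setT \/ exists u v, e u v && ~~ f u v).

Definition four_chi_rho_critical (e : rel T) : Prop :=
  packing_chi setT e = 4 /\
  forall S f, proper_subgraph e S f -> packing_chi S f < packing_chi setT e.

Definition cycle_adj (n : nat) (i j : 'I_n) : bool :=
  (nat_of_ord j == (i.+1 %% n)) || (nat_of_ord i == (j.+1 %% n)).

Definition contains_cycle (e : rel T) (n : nat) : Prop :=
  exists p : 'I_n -> T, injective p /\
    forall i j : 'I_n, cycle_adj i j -> e (p i) (p j).

Definition iso_cycle (e : rel T) (n : nat) : Prop :=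
  exists p : 'I_n -> T, bijective p /\
    forall i j : 'I_n, e (p i) (p j) = cycle_adj i j.

End PackingDefs.

From mathcomp Require Import all_boot zify.
Set Implicit Arguments. Unset Strict Implicit. Unset Printing Implicit Defensive.

(* A packing colouring of C_n with colours 1, 2, 3 unrolls to an n-periodic
   packing colouring of the infinite path.  Among any six consecutive vertices of
   such a colouring one of the two middle ones has colour 1; by periodicity
   colour 1 then sits on every other vertex and the remaining vertices alternate
   between colours 2 and 3, which forces 4 | n.  So chi_rho(C_n) = 4 (colour
   1, 2, 1, 3, ... and give the last vertex colour 4), while a proper subgraph of
   C_n lies inside a path and the pattern 1, 2, 1, 3, ... colours it with 3
   colours.  If G is critical and contains C_n, that cycle already has
   chi_rho = 4 = chi_rho(G), so it is not a proper subgraph: G is C_n. *)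

Lemma cycle_adjE n (i j : 'I_n) : cycle_adj i j = (j == ordS i) || (i == ordS j).
Proof. by []. Qed.

Lemma cycle_adj_sym n : symmetric (@cycle_adj n).
Proof. by move=> i j; rewrite /cycle_adj orbC. Qed.

Lemma modSn_cases a n : a < n -> a.+1 %% n = a.+1 /\ a.+1 < n \/ a.+1 %% n = 0 /\ a.+1 = n.
Proof.
rewrite leq_eqVlt => /predU1P [<-|lt_an]; first by right; rewrite modnn.
by left; rewrite modn_small.
Qed.

Lemma val_iter_ordS n m (i : 'I_n) : nat_of_ord (iter m (@ordS n) i) = (i + m) %% n.
Proof.
elim: m => [|m IHm] /=; first by rewrite addn0 modn_small.
by rewrite IHm -addn1 modnDml addn1 addnS.
Qed.

Lemma iter_ordS_neq n k (i : 'I_n) : 0 < k < n -> iter k (@ordS n) i != i.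
Proof.
move=> k_range; rewrite -(inj_eq val_inj) /= val_iter_ordS.
rewrite -{2}(modn_small (ltn_ord i)) -{2}[nat_of_ord i]addn0 eqn_modDl mod0n.
by rewrite modn_small; lia.
Qed.

Definition cycle_dist (n i j : nat) : nat := minn (i - j + (j - i)) (n - (i - j + (j - i))).

Lemma cycle_dist_adj n (i w j : 'I_n) :
  cycle_adj i w -> cycle_dist n i j <= (cycle_dist n w j).+1.
Proof.
rewrite /cycle_adj /cycle_dist => /orP [] /eqP adj;
  move: (ltn_ord i) (ltn_ord w) (ltn_ord j).
  by case: (modSn_cases (ltn_ord i)); lia.
by case: (modSn_cases (ltn_ord w)); lia.
Qed.

(* The position of i on the path left by deleting the edge {i0, i0 + 1} of C_n,
   counted from i0 + 1. *)
Definition cut_index (n i0 i : nat) : nat := if i0 < i then i - i0.+1 else i + n - i0.+1.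

Lemma cut_index_inj n (i0 : 'I_n) : injective (fun i : 'I_n => cut_index n i0 i).
Proof.
move=> i j; rewrite /cut_index => eq_cut; apply: ord_inj.
move: eq_cut (ltn_ord i0) (ltn_ord i) (ltn_ord j).
by case: (ltnP i0 i); case: (ltnP i0 j); lia.
Qed.

Lemma cut_index_ordS n (i0 i : 'I_n) :
  i != i0 -> cut_index n i0 (ordS i) = (cut_index n i0 i).+1.
Proof.
rewrite /cut_index -(inj_eq val_inj) /= => ne_i.
move: (ltn_ord i0) (ltn_ord i); case: (modSn_cases (ltn_ord i)) => [[-> _] | [-> i_last]] /=.
  by case: (ltnP i0 i); case: (ltnP i0 i.+1); lia.
by case: (ltnP i0 i); lia.
Qed.

(* An n-periodic packing colouring with colours 1, 2, 3 of the infinite path,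
   i.e. of C_n read around the cycle forever. *)
Section PackingSequence.
Variables (g : nat -> nat) (n : nat).
Hypothesis g_range : forall m, 1 <= g m <= 3.
Hypothesis g_sep : forall m k, 0 < k <= g m -> g (m + k) <> g m.
Hypothesis g_periodic : forall m, g (m + n) = g m.

Lemma packing_seq_sep a b : a < b -> b - a <= g a -> g b <> g a.
Proof. by move=> lt_ab; have := @g_sep a (b - a); rewrite subnKC ?subn_gt0 ?lt_ab // ltnW. Qed.

Lemma packing_seq_window m : g (m + 2) = 1 \/ g (m + 3) = 1.
Proof.
have sep i j : i < j -> j - i <= g (m + i) -> g (m + j) <> g (m + i).
  by move=> lt_ij; rewrite -(subnDl m); apply: packing_seq_sep; rewrite ltn_add2l.
case: (g (m + 2) =P 1) => [|ne2]; first by left.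
case: (g (m + 3) =P 1) => [|ne3]; first by right.
(* Colours 2, 3 in the middle force colour 1 next to the 2, and the vertex
   beyond it has no admissible colour left. *)
have [[E2 E3]|[E2 E3]] : g (m + 2) = 2 /\ g (m + 3) = 3 \/ g (m + 2) = 3 /\ g (m + 3) = 2.
  by move: (g_range (m + 2)) (g_range (m + 3)) (sep 2 3 isT); lia.
- have E1 : g (m + 1) = 1 by move: (g_range (m + 1)) (sep 1 2 isT) (sep 1 3 isT); lia.
  by move: (g_range (m + 0)) (sep 0 1 isT) (sep 0 2 isT) (sep 0 3 isT); lia.
- have E4 : g (m + 4) = 1 by move: (g_range (m + 4)) (sep 2 4 isT) (sep 3 4 isT); lia.
  by move: (g_range (m + 5)) (sep 2 5 isT) (sep 3 5 isT) (sep 4 5 isT); lia.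
Qed.

Hypothesis n_gt0 : 0 < n.

Lemma packing_seq_one_in_pair m : g m = 1 \/ g m.+1 = 1.
Proof.
have := packing_seq_window (m + n + n - 2).
have -> : m + n + n - 2 + 2 = m + n + n by lia.
have -> : m + n + n - 2 + 3 = m.+1 + n + n by lia.
by rewrite !g_periodic.
Qed.

Lemma packing_seq_alternate m : (g m.+1 == 1) = (g m != 1).
Proof.
have := packing_seq_sep (ltnSn m); rewrite subSnn.
by move: (g_range m) (packing_seq_one_in_pair m); case: eqP; case: eqP; lia.
Qed.

Lemma packing_seq_parity m j : (g (m + j) == 1) = (g m == 1) (+) odd j.
Proof.
elim: j => [|j IHj]; first by rewrite addn0 addbF.
by rewrite addnS packing_seq_alternate IHj /= addbN.
Qed.

Lemma packing_seq_skip m : g m != 1 -> g (m + 2) = 5 - g m.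
Proof.
move=> ne1; have := packing_seq_parity m 2; rewrite (negbTE ne1) /=.
move: (g_range m) (g_range (m + 2)) (@packing_seq_sep m (m + 2)); lia.
Qed.

Lemma packing_seq_period_dvd4 : 4 %| n.
Proof.
have odd_n : ~~ odd n.
  apply/negP => odd_n; have := packing_seq_parity 0 n.
  by rewrite add0n -{1}[n]add0n g_periodic odd_n addbT; case: (_ == 1).
have [m0 ne1] : exists m0, g m0 != 1.
  by case: (eqVneq (g 0) 1) => [E|]; [exists 1; rewrite packing_seq_alternate E | exists 0].
have g4 q : g (m0 + 4 * q) = g m0.
  elim: q => [|q IHq]; first by rewrite addn0.
  have g2 : g (m0 + 4 * q + 2) = 5 - g m0 by rewrite packing_seq_skip IHq.
  have -> : m0 + 4 * q.+1 = m0 + 4 * q + 2 + 2 by lia.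
  by rewrite packing_seq_skip g2; move: ne1 (g_range m0); lia.
(* Off colour 1 the colours 2 and 3 alternate, so a period n = 2 (mod 4) would
   swap them. *)
apply: contraT => n_not4; have := g_periodic m0; have -> : n = 4 * (n %/ 4) + 2.
  have n_even : n %% 2 = 0 by rewrite modn2 (negbTE odd_n).
  by move: n_not4; rewrite /dvdn; lia.
rewrite addnA packing_seq_skip g4 //; move: (g_range m0); lia.
Qed.
End PackingSequence.

Definition path_color (m : nat) : nat :=
  if m %% 2 == 0 then 1 else if m %% 4 == 1 then 2 else 3.

Lemma path_color_cases m :
  m %% 2 = 0 /\ path_color m = 1 \/ m %% 4 = 1 /\ path_color m = 2 \/
  m %% 4 = 3 /\ path_color m = 3.
Proof. by rewrite /path_color; case: eqP => ?; last case: eqP => ?; lia. Qed.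

Lemma path_color_sep m m' :
  m != m' -> path_color m = path_color m' -> path_color m < m - m' + (m' - m).
Proof. by move: (path_color_cases m) (path_color_cases m'); lia. Qed.

Definition cycle_color (n i : nat) : nat := if i == n.-1 then 4 else path_color i.

Lemma cycle_color_sep n i j : i < n -> j < n -> i != j ->
  cycle_color n i = cycle_color n j -> cycle_color n i < cycle_dist n i j.
Proof.
move=> lt_in lt_jn neq_ij; rewrite /cycle_color /cycle_dist.
by move: (path_color_cases i) (path_color_cases j); case: (i =P n.-1); case: (j =P n.-1); lia.
Qed.

Section PackingColorings.
Variables (T : finType) (S : {set T}) (f : rel T).

Lemma within_mono k k' u v : k <= k' -> within f k u v -> within f k' u v.
Proof.
elim: k' => [|k' IHk']; first by rewrite leqn0 => /eqP ->.
by rewrite leq_eqVlt => /predU1P [<- //| /IHk' w_k' /w_k'] /= ->.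
Qed.

Lemma within_dist_le (d : T -> T -> nat) :
    (forall v, d v v = 0) -> (forall u w v, f u w -> d u v <= (d w v).+1) ->
  forall k u v, within f k u v -> d u v <= k.
Proof.
move=> d_refl d_step; elim=> [|k IHk] u v /=; first by move/eqP->; rewrite d_refl.
case/orP => [/IHk/leqW // | /existsP [w /andP [f_uw /IHk]]].
by move=> le_wk; apply: leq_trans (d_step _ _ v f_uw) _.
Qed.

Lemma packing_coloringP k (c : T -> nat) :
  reflect ({in S, forall x, 1 <= c x <= k} /\
           {in S &, forall u v, u != v -> c u = c v -> ~~ within f (c u) u v})
          (packing_coloring S f k c).
Proof.
apply: (iffP andP) => [[/forall_inP c_range /forall_inP c_sep] | [c_range c_sep]].
  split=> // u v Su Sv neq_uv eq_c.
  by have /forall_inP/(_ v Sv) := c_sep u Su; rewrite neq_uv eq_c eqxx.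
split; first by apply/forall_inP.
apply/forall_inP => u Su; apply/forall_inP => v Sv; apply/implyP => /andP [neq_uv /eqP].
exact: c_sep.
Qed.

Lemma packing_colorableP k :
  reflect (exists c, packing_coloring S f k c) (packing_colorable S f k).
Proof.
apply: (iffP existsP) => [[c c_col] | [c /packing_coloringP [c_range c_sep]]].
  by exists (fun x => nat_of_ord (c x)).
have cE : {in S, forall x, nat_of_ord ([ffun x => inord (c x)] x : 'I_k.+1) = c x}.
  by move=> x Sx; rewrite ffunE inordK // ltnS; case/andP: (c_range x Sx).
exists [ffun x => inord (c x)]; apply/packing_coloringP; split=> [x Sx | u v Su Sv].
  by rewrite cE //; apply: c_range.
by rewrite !cE //; apply: c_sep.
Qed.

Lemma packing_chi_min k : packing_colorable S f k -> packing_chi S f <= k.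
Proof. by rewrite /packing_chi; case: ex_minnP => m _; apply. Qed.

Lemma packing_chi_colorable : packing_colorable S f (packing_chi S f).
Proof. by rewrite /packing_chi; case: ex_minnP. Qed.

Lemma packing_colorable_dist (d : T -> T -> nat) k (c : T -> nat) :
    (forall v, d v v = 0) -> (forall u w v, f u w -> d u v <= (d w v).+1) ->
    {in S, forall x, 1 <= c x <= k} ->
    {in S &, forall u v, u != v -> c u = c v -> c u < d u v} ->
  packing_colorable S f k.
Proof.
move=> d_refl d_step c_range c_sep; apply/packing_colorableP; exists c.
apply/packing_coloringP; split=> // u v Su Sv neq_uv eq_c.
by apply/negP => /(within_dist_le d_refl d_step); rewrite leqNgt c_sep.
Qed.

Lemma packing_colorable_path (t : T -> nat) :
    {in S &, injective t} -> (forall u v, f u v -> t u = (t v).+1 \/ t v = (t u).+1) ->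
  packing_colorable S f 3.
Proof.
move=> t_inj t_adj.
apply: (@packing_colorable_dist (fun u v => t u - t v + (t v - t u)) _ (path_color \o t)).
- by move=> v; lia.
- by move=> u w v /t_adj; lia.
- by move=> x _ /=; move: (path_color_cases (t x)); lia.
move=> u v Su Sv neq_uv; apply: path_color_sep.
by apply: contra neq_uv => /eqP/t_inj ->.
Qed.

Lemma packing_colorable_cycle n (g : T -> 'I_n) :
    injective g -> (forall u v, f u v -> cycle_adj (g u) (g v)) ->
  packing_colorable S f 4.
Proof.
move=> g_inj g_adj.
apply: (@packing_colorable_dist (fun u v => cycle_dist n (g u) (g v)) _
                                 (fun x => cycle_color n (g x))).
- by move=> v; rewrite /cycle_dist; lia.
- by move=> u w v /g_adj /cycle_dist_adj.
- by move=> x _; rewrite /cycle_color; move: (path_color_cases (g x)); case: eqP; lia.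
move=> u v _ _ neq_uv; apply: cycle_color_sep => //.
by apply: contra neq_uv => /eqP/val_inj/g_inj ->.
Qed.

End PackingColorings.

Section CycleLowerBound.
Variables (T : finType) (S : {set T}) (f : rel T) (n : nat) (p : 'I_n -> T).
Hypothesis p_adj : forall i j, cycle_adj i j -> f (p i) (p j).

Lemma within_iter_ordS k i : within f k (p i) (p (iter k (@ordS n) i)).
Proof.
elim: k i => [|k IHk] i; first by rewrite /= eqxx.
rewrite iterSr /=; apply/orP; right; apply/existsP; exists (p (ordS i)).
by rewrite IHk p_adj // cycle_adjE eqxx.
Qed.

Lemma cycle_packing_chi_gt3 :
  3 < n -> ~~ (4 %| n) -> injective p -> (forall i, p i \in S) -> 3 < packing_chi S f.
Proof.
move=> n_gt3 n_not4 p_inj p_in; have n_gt0 : 0 < n by apply: leq_trans n_gt3.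
have := packing_chi_colorable S f; rewrite ltnNge; apply: contraL => chi_le3.
apply/negP => /packing_colorableP [c /packing_coloringP [c_range c_sep]].
pose g m := c (p (iter m (@ordS n) (Ordinal n_gt0))).
have g_range m : 1 <= g m <= 3.
  by have := c_range _ (p_in (iter m (@ordS n) (Ordinal n_gt0))); rewrite /g; lia.
apply: (negP n_not4); apply: (@packing_seq_period_dvd4 g) => // [m k k_range | m].
  rewrite /g addnC iterD; set i := iter m _ _ => eq_c.
  have /c_sep : p i != p (iter k (@ordS n) i).
    by rewrite eq_sym (inj_eq p_inj) iter_ordS_neq //; move: (g_range m); lia.
  move=> /(_ (p_in _) (p_in _) (esym eq_c)).
  by rewrite (within_mono _ (within_iter_ordS k i)) //; case/andP: k_range.
by rewrite /g; congr (c (p _)); apply: ord_inj; rewrite !val_iter_ordS addnA modnDr.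
Qed.

End CycleLowerBound.

Section CycleSubgraphs.
Variables (T : finType) (e : rel T).

Definition cycle_rel n (p : 'I_n -> T) : rel T :=
  fun u v => [exists i, exists j, [&& u == p i, v == p j & cycle_adj i j]].

Lemma cycle_relE n (p : 'I_n -> T) i j :
  injective p -> cycle_rel p (p i) (p j) = cycle_adj i j.
Proof.
move=> p_inj; apply/existsP/idP => [[i' /existsP [j' /and3P []]] | adj].
  by move=> /eqP/p_inj -> /eqP/p_inj ->.
by exists i; apply/existsP; exists j; rewrite !eqxx.
Qed.

Lemma cycle_rel_subgraph n (p : 'I_n -> T) :
  (forall i j, cycle_adj i j -> e (p i) (p j)) -> subgraph e (p @: setT) (cycle_rel p).
Proof.
move=> p_adj; split=> [u v /existsP [i /existsP [j /and3P [/eqP -> /eqP -> adj]]] | u v].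
  by rewrite p_adj // !imset_f ?inE.
by apply/existsP/existsP => [][i /existsP [j /and3P [u_i v_j adj]]];
  exists j; apply/existsP; exists i; rewrite u_i v_j cycle_adj_sym adj.
Qed.

Lemma critical_subgraph_full S f :
    four_chi_rho_critical e -> subgraph e S f -> packing_chi setT e <= packing_chi S f ->
  S = setT /\ forall u v, e u v -> f u v.
Proof.
move=> [_ crit] sub chi_le.
have not_proper : ~ proper_subgraph e S f by move/crit; rewrite ltnNge chi_le.
split.
  by apply/eqP; apply: contraT => S_ne; exfalso; apply: not_proper; split; [|left].
move=> u v e_uv; apply: contraT => f_uv; exfalso; apply: not_proper.
by split; [|right; exists u, v; rewrite e_uv].
Qed.

Lemma critical_cycle_iso n :
  3 < n -> ~~ (4 %| n) -> four_chi_rho_critical e -> contains_cycle e n -> iso_cycle e n.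
Proof.
move=> n_gt3 n_not4 crit [p [p_inj p_adj]].
have p_in i : p i \in p @: setT by rewrite imset_f ?inE.
have chi_le : packing_chi setT e <= packing_chi (p @: setT) (cycle_rel p).
  case: crit => -> _; apply: (cycle_packing_chi_gt3 (p := p)) => // i j adj.
  by rewrite cycle_relE.
have [S_full e_sub] := critical_subgraph_full crit (cycle_rel_subgraph p_adj) chi_le.
exists p; split.
  by apply: inj_card_bij => //; rewrite -cardsT -S_full card_imset // cardsT.
by move=> i j; apply/idP/idP => [/e_sub|/p_adj //]; rewrite cycle_relE.
Qed.

End CycleSubgraphs.

Section IsomorphicToCycle.
Variables (T : finType) (e : rel T) (n : nat) (p : 'I_n -> T) (g : T -> 'I_n).
Hypotheses (pK : cancel p g) (gK : cancel g p).
Hypothesis p_e : forall i j, e (p i) (p j) = cycle_adj i j.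

Lemma proper_subgraph_missing_edge S f :
  proper_subgraph e S f -> exists i0, ~~ f (p i0) (p (ordS i0)).
Proof.
move=> [[f_sub f_sym] [S_ne | [u [v /andP [e_uv not_f_uv]]]]].
  have /subsetPn [x _ Sx] : ~~ ([set: T] \subset S) by rewrite subTset.
  by exists (g x); apply/negP => /f_sub /and3P [_]; rewrite gK (negbTE Sx).
move: e_uv; rewrite -[u]gK -[v]gK p_e cycle_adjE => /orP [] /eqP E.
  by exists (g u); rewrite -E !gK.
by exists (g v); rewrite -E !gK f_sym.
Qed.

Lemma proper_subgraph_packing_colorable3 S f :
  proper_subgraph e S f -> packing_colorable S f 3.
Proof.
move=> proper; have [i0 not_f_cut] := proper_subgraph_missing_edge proper.
case: proper => [[f_sub f_sym] _].
apply: (packing_colorable_path (t := fun x => cut_index n i0 (g x))).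
  by move=> u v _ _ /cut_index_inj /(can_inj gK).
move=> u v f_uv; have /and3P [] := f_sub _ _ f_uv.
rewrite -[u]gK -[v]gK p_e cycle_adjE !gK => /orP [] /eqP E _ _.
  right; rewrite E cut_index_ordS //.
  by apply: contra not_f_cut => /eqP <-; rewrite -E !gK.
left; rewrite E cut_index_ordS //.
by apply: contra not_f_cut => /eqP <-; rewrite -E !gK f_sym.
Qed.

Lemma cycle_packing_chi :
  3 < n -> ~~ (4 %| n) -> packing_chi setT e = 4.
Proof.
move=> n_gt3 n_not4; apply/eqP; rewrite eqn_leq; apply/andP; split.
  apply/packing_chi_min/(packing_colorable_cycle _ (can_inj gK)) => u v.
  by rewrite -[u]gK -[v]gK p_e !pK.
apply: (cycle_packing_chi_gt3 (p := p)) => //; last exact: can_inj pK.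
by move=> i j; rewrite p_e.
Qed.

Lemma cycle_four_critical : 3 < n -> ~~ (4 %| n) -> four_chi_rho_critical e.
Proof.
move=> n_gt3 n_not4; have chi4 := cycle_packing_chi n_gt3 n_not4.
split=> // S f proper; rewrite chi4 ltnS.
exact/packing_chi_min/proper_subgraph_packing_colorable3.
Qed.

End IsomorphicToCycle.

Theorem proposition3p2 (T : finType) (e : rel T)
  (e_sym : symmetric e) (e_irr : irreflexive e)
  (n : nat) (n_ge5 : 5 <= n) (n_not4 : ~~ (4 %| n))
  (HC : contains_cycle e n) :
  four_chi_rho_critical e <-> iso_cycle e n.
Proof.
have n_gt3 : 3 < n by apply: leq_trans n_ge5.
split; first by move=> crit; apply: critical_cycle_iso.
by case=> p [[g pK gK] p_e]; apply: (cycle_four_critical pK gK p_e).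
Qed.
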